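(* Let $n\ge 2$ be an integer and $M$ a real $n\times n$ matrix with all entries in $\{0,1\}$. Let $t$ be the number of entries equal to $1$ and $k := t/n$. Then: if $t < n$: $|\det M| \le k^{n/2}$; if $t = n$: $|\det M| \le 1$; if $t > n$: $|\det M| \le k^{\frac{n+1}{2}}\left(\frac{n-k}{n-1}\right)^{\frac{n-1}{2}}$. *)

(* Real numbers are modelled by an arbitrary real closed field
   R : rcfType (the statement is purely algebraic/order-theoretic). *)
From HB Require Import structures.
From mathcomp Require Import all_boot all_order all_algebra.
Set Implicit Arguments. Unset Strict Implicit. Unset Printing Implicit Defensive.
Import Order.TTheory GRing.Theory Num.Theory.
Local Open Scope ring_scope.

Definition ones_count (R : rcfType) (n : nat) (M : 'M[R]_n) : nat :=
  #|[pred p : 'I_n * 'I_n | M p.1 p.2 == 1]|.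

Definition half_pow (R : rcfType) (x : R) (m : nat) : R := Num.sqrt (x ^+ m).

From HB Require Import structures.
From mathcomp Require Import all_boot all_order all_algebra.
From mathcomp Require Import ring lra.
Set Implicit Arguments. Unset Strict Implicit. Unset Printing Implicit Defensive.
Import Order.TTheory GRing.Theory Num.Theory.
Local Open Scope ring_scope.

(** Hadamard's inequality applied to the rows of [M], followed by AM-GM on the
   row sums, gives [det M ^ 2 <= k ^ n]; this settles [t <= n].  For [t > n]
   multiply [M] on the right by an orthogonal [Q] whose first column is the
   normalised all-ones vector.  The first column of [M Q] holds the row sums
   divided by [sqrt n], so by Cauchy-Schwarz its squared norm [a] is at least
   [k ^ 2], while the squared column norms of [M Q] still add up to [t].
   Hadamard's inequality on the columns of [M Q] and AM-GM on all but the
   first one give [det M ^ 2 <= a ((t - a) / (n - 1)) ^ (n - 1)], and the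
   right-hand side decreases in [a] on [[k ^ 2, t]]. *)

Section DotProduct.
Variable R : rcfType.

Definition dot m (a b : 'cV[R]_m) : R := (a^T *m b) 0 0.

Lemma dotE m (a b : 'cV[R]_m) : a^T *m b = (dot a b)%:M.
Proof. exact: mx11_scalar. Qed.

Lemma dot_sum m (a b : 'cV[R]_m) : dot a b = \sum_i a i 0 * b i 0.
Proof. by rewrite /dot mxE; apply: eq_bigr => i _; rewrite mxE. Qed.

Lemma dotC m (a b : 'cV[R]_m) : dot a b = dot b a.
Proof. by rewrite !dot_sum; apply: eq_bigr => i _; rewrite mulrC. Qed.

Lemma dot_ge0 m (a : 'cV[R]_m) : 0 <= dot a a.
Proof. by rewrite dot_sum; apply: sumr_ge0 => i _; rewrite -expr2 sqr_ge0. Qed.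

Lemma dot_eq0 m (a : 'cV[R]_m) : dot a a = 0 -> a = 0.
Proof.
have sqr_ge0' i : true -> 0 <= a i 0 * a i 0 by rewrite -expr2 sqr_ge0.
rewrite dot_sum => /psumr_eq0P a0; apply/matrixP => i j.
rewrite (ord1 j) !mxE; have /eqP := a0 sqr_ge0' i isT.
by rewrite mulf_eq0 orbb => /eqP.
Qed.

Lemma dotBl m (a b c : 'cV[R]_m) : dot (a - b) c = dot a c - dot b c.
Proof. by rewrite /dot raddfB /= mulmxBl !mxE. Qed.

Lemma dotZl m x (a c : 'cV[R]_m) : dot (x *: a) c = x * dot a c.
Proof. by rewrite /dot linearZ /= -scalemxAl mxE. Qed.

Lemma dotBr m (a b c : 'cV[R]_m) : dot c (a - b) = dot c a - dot c b.
Proof. by rewrite dotC dotBl !(dotC c). Qed.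

Lemma dotZr m x (a c : 'cV[R]_m) : dot c (x *: a) = x * dot c a.
Proof. by rewrite dotC dotZl dotC. Qed.

Lemma dot_delta0l m (c : 'cV[R]_m.+1) : dot (delta_mx 0 0) c = c 0 0.
Proof. by rewrite /dot trmx_delta -rowE !mxE. Qed.

End DotProduct.

Section Householder.
Variable R : rcfType.

Section Reflection.
Variables (m : nat) (c : 'cV[R]_m.+1).
Let r := Num.sqrt (dot c c).
Let v := c - r *: delta_mx 0 0.
Let s := dot v v.

(* Since [2 / 0 = 0], this is the identity when [c] already is a nonnegative
   multiple of [e_0]. *)
Definition householder : 'M[R]_m.+1 := 1%:M - (2 / s) *: (v *m v^T).

Lemma trmx_householder : householder^T = householder.
Proof. by rewrite /householder linearB /= trmx1 linearZ /= trmx_mul trmxK. Qed.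

Lemma householderK : householder *m householder = 1%:M.
Proof.
have vv : (v *m v^T) *m (v *m v^T) = s *: (v *m v^T).
  by rewrite mulmxA -(mulmxA v) dotE mul_mx_scalar -scalemxAl.
rewrite /householder mulmxBl mulmxBr mul1mx mulmxBr mulmx1 -!scalemxAl.
rewrite -!scalemxAr scalerA vv scalerA mul1mx.
have [->|s0] := eqVneq s 0; first by rewrite invr0 !mulr0 !scale0r !subr0.
have -> : 2 / s * (2 / s) * s = 2 / s + 2 / s by field.
by rewrite scalerDl opprD opprK addKr addrNK.
Qed.

Lemma householder_col : householder *m c = r *: delta_mx 0 0.
Proof.
have cc : dot c c = r ^+ 2 by rewrite sqr_sqrtr // dot_ge0.
have [s0|s0] := eqVneq s 0.
  rewrite /householder s0 invr0 mulr0 scale0r subr0 mul1mx.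
  by apply/eqP; rewrite -subr_eq0; apply/eqP/dot_eq0.
have e00 : dot (delta_mx 0 0) (delta_mx 0 0 : 'cV[R]_m.+1) = 1.
  by rewrite dot_delta0l mxE !eqxx.
have vc : dot v c = r ^+ 2 - r * c 0 0 by rewrite /v dotBl dotZl dot_delta0l cc.
have sE : s = 2 * (r ^+ 2 - r * c 0 0).
  rewrite /s /v !dotBl !dotBr !dotZl !dotZr dot_delta0l e00 (dotC c).
  by rewrite dot_delta0l cc; ring.
rewrite /householder mulmxBl mul1mx -scalemxAl -mulmxA dotE mul_mx_scalar scalerA.
have -> : 2 / s * dot v c = 1.
  rewrite vc; rewrite sE mulf_eq0 negb_or in s0 *; case/andP: s0 => _ s0.
  by field.
by rewrite scale1r /v opprB addrC subrK.
Qed.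

End Reflection.

Lemma householder_orth m (c : 'cV[R]_m.+1) :
  (householder c)^T *m householder c = 1%:M.
Proof. by rewrite trmx_householder householderK. Qed.

End Householder.

Section Hadamard.
Variable R : rcfType.

Definition col_norm2 n (N : 'M[R]_n) j : R := \sum_i N i j ^+ 2.

Lemma col_norm2E n (N : 'M[R]_n) j : col_norm2 N j = (N^T *m N) j j.
Proof. by rewrite /col_norm2 mxE; apply: eq_bigr => i _; rewrite mxE expr2. Qed.

Lemma col_norm2_ge0 n (N : 'M[R]_n) j : 0 <= col_norm2 N j.
Proof. by apply: sumr_ge0 => i _; rewrite sqr_ge0. Qed.

Lemma col_norm2_orth_mulmx n (H N : 'M[R]_n) j :
  H^T *m H = 1%:M -> col_norm2 (H *m N) j = col_norm2 N j.
Proof.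
by move=> HH; rewrite !col_norm2E trmx_mul -mulmxA (mulmxA H^T) HH mul1mx.
Qed.

Lemma sum_col_norm2_mulmx_orth n (N Q : 'M[R]_n) :
  Q^T *m Q = 1%:M -> \sum_j col_norm2 (N *m Q) j = \sum_j col_norm2 N j.
Proof.
have trE (A : 'M[R]_n) : \sum_j col_norm2 A j = \tr (A^T *m A).
  by apply: eq_bigr => j _; rewrite col_norm2E.
move=> QQ; rewrite !trE trmx_mul -mulmxA mxtrace_mulC -!mulmxA.
by rewrite (mulmx1C QQ) mulmx1.
Qed.

Lemma det_orth_sqr n (H : 'M[R]_n) : H^T *m H = 1%:M -> \det H ^+ 2 = 1.
Proof. by move=> HH; rewrite expr2 -{1}det_tr -det_mulmx HH det1. Qed.

(* A reflection clears the first column below the diagonal; induct on the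
   lower right block. *)
Lemma det_sqr_le_prod_col_norm2 n (N : 'M[R]_n) :
  \det N ^+ 2 <= \prod_j col_norm2 N j.
Proof.
elim: n N => [|n IH] N; first by rewrite det_mx00 big_ord0 expr1n.
set H := householder (col 0 N); set P := H *m N.
have HH : H^T *m H = 1%:M by apply: householder_orth.
have Pi0 i : i != 0 -> P i 0 = 0.
  move=> i0; have -> : P i 0 = col 0 P i 0 by rewrite [RHS]mxE.
  rewrite colE /P -mulmxA -colE.
  by rewrite householder_col !mxE (negbTE i0) mulr0.
have detP : \det P = P 0 0 * \det (row' 0 (col' 0 P)).
  rewrite (expand_det_col P 0) big_ord_recl big1 ?addr0.
    by rewrite /cofactor addn0 expr0 mul1r.
  by move=> i _; rewrite Pi0 ?mul0r // neq_lift.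
have P0 : col_norm2 P 0 = P 0 0 ^+ 2.
  rewrite /col_norm2 big_ord_recl big1 ?addr0 // => i _.
  by rewrite Pi0 ?expr0n // neq_lift.
have Pblock j : col_norm2 (row' 0 (col' 0 P)) j <= col_norm2 P (lift 0 j).
  rewrite [col_norm2 P _]/col_norm2 big_ord_recl; apply: ler_wpDl (sqr_ge0 _) _.
  by rewrite le_eqVlt; apply/orP; left; apply/eqP/eq_bigr => i _; rewrite !mxE.
have -> : \det N ^+ 2 = \det P ^+ 2.
  by rewrite det_mulmx exprMn (det_orth_sqr HH) mul1r.
rewrite (eq_bigr (col_norm2 P)) => [|j _]; last by rewrite col_norm2_orth_mulmx.
rewrite detP exprMn big_ord_recl P0 ler_wpM2l ?sqr_ge0 //.
apply: le_trans (IH _) _.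
by apply: ler_prod => j _; rewrite col_norm2_ge0 Pblock.
Qed.

Lemma det_sqr_le_first_col n (N : 'M[R]_n.+1) :
  \det N ^+ 2 <=
  col_norm2 N 0 * ((\sum_j col_norm2 N j - col_norm2 N 0) / n%:R) ^+ n.
Proof.
apply: le_trans (det_sqr_le_prod_col_norm2 N) _.
rewrite big_ord_recl ler_wpM2l ?col_norm2_ge0 //.
rewrite [\sum_j _]big_ord_recl addrC addKr.
have [+ _] := @leif_AGM R _ predT _ (fun j _ => col_norm2_ge0 N (lift 0 j)).
by rewrite card_ord.
Qed.

Lemma orthmx_const_first_col n : exists Q : 'M[R]_n.+1,
  Q^T *m Q = 1%:M /\ forall i, Q i 0 = (Num.sqrt n.+1%:R)^-1.
Proof.
set sN := Num.sqrt n.+1%:R.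
have sN2 : sN ^+ 2 = n.+1%:R by rewrite sqr_sqrtr ?ler0n.
pose u : 'cV[R]_n.+1 := sN^-1 *: const_mx 1.
have uu : dot u u = 1.
  rewrite dot_sum (eq_bigr (fun _ => (n.+1%:R)^-1)) => [|i _]; last first.
    by rewrite !mxE mulr1 -expr2 exprVn sN2.
  by rewrite sumr_const card_ord -[_ *+ n.+1]mulr_natl mulfV ?pnatr_eq0.
exists (householder u); split=> [|i]; first exact: householder_orth.
have Qu : householder u *m u = delta_mx 0 0.
  by rewrite householder_col uu sqrtr1 scale1r.
have -> : householder u i 0 = col 0 (householder u) i 0 by rewrite [RHS]mxE.
rewrite colE -Qu mulmxA householderK.
by rewrite mul1mx !mxE mulr1.
Qed.

Lemma col_norm2_mulmx_const_col n (M Q : 'M[R]_n) j c :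
  (forall i, Q i j = c) ->
  col_norm2 (M *m Q) j = c ^+ 2 * \sum_i (\sum_l M i l) ^+ 2.
Proof.
move=> Qc; rewrite /col_norm2 mulr_sumr; apply: eq_bigr => i _.
rewrite mxE (eq_bigr (fun l => M i l * c)) => [|l _]; last by rewrite Qc.
by rewrite -mulr_suml exprMn mulrC.
Qed.

End Hadamard.

Section Inequalities.
Variable R : rcfType.

Lemma tangent_le_exprD (s d : R) p : 0 <= s -> 0 <= d ->
  s ^+ p.+1 + p.+1%:R * d * s ^+ p <= (s + d) ^+ p.+1.
Proof.
move=> s0 d0; elim: p => [|p IH]; first by rewrite expr1 expr0 mulr1 mul1r.
rewrite [in leRHS]exprSr; apply: le_trans (ler_wpM2r (addr_ge0 s0 d0) IH).
have sp0 : 0 <= s ^+ p by rewrite exprn_ge0.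
rewrite !exprS -[p.+2]addn1 -[p.+1]addn1 !natrD.
set A := s ^+ p; set q : R := p%:R.
have q0 : 0 <= q by rewrite ler0n.
have : 0 <= (q + 1) * (d * (d * A)) by rewrite !mulr_ge0 ?addr_ge0.
nra.
Qed.

Lemma mul_subrX_le (x y T : R) p : 0 <= x -> x <= y -> y <= T ->
  T - y <= p.+1%:R * x -> y * (T - y) ^+ p.+1 <= x * (T - x) ^+ p.+1.
Proof.
move=> x0 xy yT Ty; set S := T - y; set d := y - x.
have S0 : 0 <= S by rewrite subr_ge0.
have d0 : 0 <= d by rewrite subr_ge0.
have -> : T - x = S + d by rewrite /S /d; ring.
have -> : y = x + d by rewrite /d; ring.
apply: le_trans (ler_wpM2l x0 (tangent_le_exprD p S0 d0)).
have := ler_wpM2r (exprn_ge0 p S0) (ler_wpM2l d0 Ty).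
rewrite -/S exprS; clearbody S d; nra.
Qed.

Lemma sqr_sum_le_card n (x : 'I_n -> R) :
  (\sum_i x i) ^+ 2 <= n%:R * \sum_i x i ^+ 2.
Proof.
case: n x => [|n] x; first by rewrite !big_ord0 expr0n mul0r.
set S := \sum_i x i; set N : R := n.+1%:R.
have N0 : 0 < N by rewrite ltr0n.
have : 0 <= \sum_i (N * x i - S) ^+ 2 by apply: sumr_ge0 => i _; apply: sqr_ge0.
rewrite (eq_bigr (fun i => N ^+ 2 * x i ^+ 2 - 2 * N * S * x i + S ^+ 2));
  last by move=> i _; ring.
rewrite !big_split /= sumrN -!mulr_sumr sumr_const card_ord -/S -/N.
rewrite -[_ *+ _]mulr_natl -/N => h.
by rewrite -(ler_pM2l N0); nra.
Qed.

End Inequalities.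

Section ZeroOneMatrix.
Variables (R : rcfType) (n : nat) (M : 'M[R]_n).
Hypothesis M01 : forall i j, M i j = 0 \/ M i j = 1.

Lemma sum_mx01 : \sum_i \sum_j M i j = (ones_count M)%:R.
Proof.
rewrite pair_bigA /ones_count -sum1_card natr_sum big_mkcond [RHS]big_mkcond.
apply: eq_bigr => -[i j] _ /=; rewrite inE /=.
by case: (M01 i j) => ->; rewrite ?eqxx //= eq_sym oner_eq0.
Qed.

Lemma sqr_mx01 i j : M i j ^+ 2 = M i j.
Proof. by case: (M01 i j) => ->; rewrite ?expr0n ?expr1n. Qed.

Lemma sum_col_norm2_mx01 : \sum_j col_norm2 M j = (ones_count M)%:R.
Proof.
rewrite -sum_mx01 exchange_big; apply: eq_bigr => j _.
by apply: eq_bigr => i _; rewrite sqr_mx01.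
Qed.

Lemma det_mx01_sqr_le : \det M ^+ 2 <= ((ones_count M)%:R / n%:R) ^+ n.
Proof.
rewrite -det_tr; apply: le_trans (det_sqr_le_prod_col_norm2 _) _.
have rowE i : col_norm2 M^T i = \sum_j M i j.
  by apply: eq_bigr => j _; rewrite mxE sqr_mx01.
rewrite -sum_mx01 -(eq_bigr _ (fun i _ => rowE i)).
have [+ _] := @leif_AGM R _ predT _ (fun i _ => col_norm2_ge0 M^T i).
by rewrite card_ord.
Qed.

End ZeroOneMatrix.

Lemma det_mx01_sqr_le_dense (R : rcfType) n (M : 'M[R]_n.+2)
    (M01 : forall i j, M i j = 0 \/ M i j = 1) :
  let t := ones_count M in
  let k : R := t%:R / n.+2%:R in
  (n.+2 < t)%N ->
  \det M ^+ 2 <= k ^+ n.+3 * ((n.+2%:R - k) / (n.+2%:R - 1)) ^+ n.+1.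
Proof.
move=> t k nt; set N : R := n.+2%:R.
have N0 : 0 < N by rewrite ltr0n.
have tk : t%:R = N * k by rewrite /k mulrC divfK ?gt_eqF.
have k1 : 1 < k by rewrite /k ltr_pdivlMr // mul1r ltr_nat.
clearbody k.
have [Q [QQ Q0]] := orthmx_const_first_col R n.+1.
set P := M *m Q; set a := col_norm2 P 0.
have ka : k ^+ 2 <= a.
  rewrite /a (col_norm2_mulmx_const_col _ Q0) exprVn sqr_sqrtr ?ler0n // -/N.
  have CS := sqr_sum_le_card (fun i => \sum_j M i j).
  rewrite sum_mx01 // -/t -/N tk in CS.
  rewrite mulrC ler_pdivlMr // -(ler_pM2l N0).
  by have -> : N * (k ^+ 2 * N) = (N * k) ^+ 2 by ring.
have sumP : \sum_j col_norm2 P j = t%:R.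
  by rewrite sum_col_norm2_mulmx_orth // sum_col_norm2_mx01.
have a_le_t : a <= t%:R.
  rewrite -sumP big_ord_recl lerDl; apply: sumr_ge0 => j _.
  exact: col_norm2_ge0.
have -> : \det M ^+ 2 = \det P ^+ 2.
  by rewrite det_mulmx exprMn (det_orth_sqr QQ) mulr1.
apply: le_trans (det_sqr_le_first_col P) _; rewrite sumP -/a.
have -> : N - 1 = n.+1%:R by rewrite /N -addn1 natrD addrK.
rewrite !expr_div_n !mulrA ler_pM2r ?invr_gt0 ?exprn_gt0 ?ltr0n //.
apply: le_trans (mul_subrX_le (sqr_ge0 k) ka a_le_t _) _.
  by rewrite tk -addn1 natrD /N -addn2 natrD in k1 *; nra.
have -> : t%:R - k ^+ 2 = k * (N - k) by rewrite tk; ring.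
by rewrite exprMn mulrA -exprD.
Qed.

Theorem mainTheorem13 (R : rcfType) (n : nat) (hn : (2 <= n)%N)
  (M : 'M[R]_n) (h01 : forall i j, M i j = 0 \/ M i j = 1) :
  let t := ones_count M in
  let k : R := t%:R / n%:R in
  [/\ (t < n)%N -> `|\det M| <= half_pow k n,
      t = n -> `|\det M| <= 1
    & (n < t)%N ->
      `|\det M| <= half_pow k n.+1 * half_pow ((n%:R - k) / (n%:R - 1)) n.-1].
Proof.
case: n hn M h01 => [|[|n]] // _ M h01 t k.
have k0 : 0 <= k by rewrite divr_ge0 ?ler0n.
have le_sqrt (x : R) : 0 <= x -> \det M ^+ 2 <= x -> `|\det M| <= Num.sqrt x.
  by move=> x0 dx; rewrite -sqrtr_sqr ler_sqrt.
have dM := det_mx01_sqr_le h01; rewrite -/t -/k in dM.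
have dense := det_mx01_sqr_le_dense h01.
split=> [_|tn|nt].
- exact: le_sqrt (exprn_ge0 _ k0) dM.
- have k1 : k = 1 by rewrite /k tn divff ?pnatr_eq0.
  by rewrite -sqrtr1 -(expr1n R n.+2) -k1; apply: le_sqrt; rewrite ?exprn_ge0.
- rewrite /half_pow -sqrtrM ?exprn_ge0 //.
  exact: le_sqrt (le_trans (sqr_ge0 _) (dense nt)) (dense nt).
Qed.
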